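(* Let $d = 2$ and $n \ge 1$. Every generalized epistemic state $(V,\vec v)$ on $n$ elementary systems has a corresponding toy stabilizer state, and every toy stabilizer state $\mathcal{S}$ on $n$ elementary systems has a corresponding generalized epistemic state. Furthermore, if the observables $\vec f, \vec g \in \mathbb{Z}_2^{2n}$ correspond to the toy Pauli operators $g', g''$ respectively, then $\vec f + \vec g$ corresponds to $g' g''$.
   Context: Generalized formalism ($d=2$): phase space $\Omega = \mathbb{Z}_2^{2n}$ with coordinates $\vec m = (q_1,p_1,\dots,q_n,p_n)^T$. An observable (quadrature variable) is a vector $\vec f \in \Omega$, evaluated on $\vec m$ as $\vec f^T \vec m \bmod 2$. The symplectic form is $\langle \vec f, \vec g\rangle = \sum_{i=1}^n (f_{2i-1} g_{2i} - f_{2i} g_{2i-1}) \bmod 2$; $\vec f,\vec g$ commute if $\langle \vec f,\vec g\rangle = 0$. A subspace $V\subseteq\Omega$ is isotropic if all its elements pairwise commute. A generalized epistemic state is a pair $(V,\vec v)$ with $V$ isotropic and $\vec v\in\Omega$ (valuation vector). Toy stabilizer formalism: let $\mathcal{X} = \mathrm{diag}(1,-1,1,-1)$, $\mathcal{Y} = \mathrm{diag}(1,-1,-1,1)$, $\mathcal{Z} = \mathrm{diag}(1,1,-1,-1)$ (so $\mathcal Y = \mathcal Z\mathcal X$), and the toy Pauli group $G_n = \{\alpha\, p_1\otimes\cdots\otimes p_n : p_i \in \{\mathbb{1}_4,\mathcal X,\mathcal Y,\mathcal Z\}, \alpha\in\{\pm1\}\}$, generated by $-\mathbb 1$ and $\mathcal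 X_k,\mathcal Z_k$ (acting as $\mathcal X,\mathcal Z$ on the $k$-th factor). Let $m: G_n \to P_n$ be the group homomorphism into the $n$-qubit Pauli group with $m(\mathcal X_k) = X_k$, $m(\mathcal Z_k) = Z_k$, $m(-\mathbb 1) = -\mathbb 1$; two elements $g,h\in G_n$ ''commute'' if $m(g)$ and $m(h)$ commute. A toy stabilizer state is a subgroup $\mathcal S\le G_n$ whose elements pairwise ''commute'' and which does not contain $-\mathbb 1$. Correspondence: an observable $\vec f$ corresponds to a toy Pauli operator $g = \alpha p_1\otimes\cdots\otimes p_n$ (with any $\alpha\in\{\pm 1\}$) if for each $j$: $(f_{2j-1},f_{2j}) = (0,0) \iff p_j = \mathbb 1$, $(0,1)\iff p_j = \mathcal Z$, $(1,0)\iff p_j=\mathcal X$, $(1,1)\iff p_j = \mathcal Y$. A stabilizer state $\mathcal S$ corresponds to a generalized state $(V,\vec v)$ (and vice versa) iff for each $\vec f\in V$ there is a corresponding $g = \alpha p_1\otimes\cdots\otimes p_n \in \mathcal S$ with $\alpha = (-1)^{\vec f^T \vec v}$. *)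

From HB Require Import structures.
From mathcomp Require Import all_boot all_order all_algebra.
From mathcomp Require Import zify.
Set Implicit Arguments. Unset Strict Implicit. Unset Printing Implicit Defensive.
Import GRing.Theory.
Local Open Scope ring_scope.

(* Coordinates (q_1,p_1,...,q_n,p_n); with 0-based indices, system j   *)
(* (j : 'I_n) has q_j at index 2j and p_j at index 2j+1.               *)

Definition phase (n : nat) := 'rV['F_2]_(2 * n).

Lemma q_idx_lt (n : nat) (j : 'I_n) : (2 * j < 2 * n)%N.
Proof. by rewrite ltn_pmul2l. Qed.

Lemma p_idx_lt (n : nat) (j : 'I_n) : (2 * j + 1 < 2 * n)%N.
Proof. have := ltn_ord j; lia. Qed.

Definition qc (n : nat) (f : phase n) (j : 'I_n) : 'F_2 :=
  f 0 (Ordinal (q_idx_lt j)).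
Definition pc (n : nat) (f : phase n) (j : 'I_n) : 'F_2 :=
  f 0 (Ordinal (p_idx_lt j)).

Definition fdot (n : nat) (f m : phase n) : 'F_2 :=
  \sum_(i < 2 * n) f 0 i * m 0 i.

Definition symp (n : nat) (f g : phase n) : 'F_2 :=
  \sum_(j < n) (qc f j * pc g j - pc f j * qc g j).

Definition commute_obs (n : nat) (f g : phase n) : Prop := symp f g = 0.

Definition subspace (n : nat) (V : {set phase n}) : Prop :=
  [/\ 0 \in V,
      (forall f g, f \in V -> g \in V -> f + g \in V) &
      (forall (a : 'F_2) f, f \in V -> a *: f \in V)].

Definition isotropic (n : nat) (V : {set phase n}) : Prop :=
  subspace V /\ forall f g, f \in V -> g \in V -> commute_obs f g.

(* A generalized epistemic state is a pair (V, v) with V isotropic. *)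

(* Toy operators on n elementary systems are diagonal 4^n x 4^n        *)
(* matrices; a diagonal matrix is represented by its diagonal, i.e. a  *)
(* function on basis labels {ffun 'I_n -> 'I_4}.  The tensor product   *)
(* of diagonal matrices has diagonal entry the product of the factor   *)
(* entries; the matrix product is the pointwise product of diagonals.  *)

Inductive pauli := PI | PX | PY | PZ.

Definition toy1 (a : pauli) (k : 'I_4) : int :=
  match a, nat_of_ord k with
  | PI, _ => 1
  | PX, 0%N => 1 | PX, 1%N => -1 | PX, 2%N => 1 | PX, _ => -1
  | PY, 0%N => 1 | PY, 1%N => -1 | PY, 2%N => -1 | PY, _ => 1
  | PZ, 0%N => 1 | PZ, 1%N => 1 | PZ, 2%N => -1 | PZ, _ => -1
  end.

Definition toyop (n : nat) := {ffun {ffun 'I_n -> 'I_4} -> int}.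

Definition toy_op (n : nat) (alpha : int) (p : 'I_n -> pauli) : toyop n :=
  [ffun k : {ffun 'I_n -> 'I_4} => alpha * \prod_(j < n) toy1 (p j) (k j)].

Definition toy_mul (n : nat) (g h : toyop n) : toyop n := [ffun k => g k * h k].
Definition toy_one (n : nat) : toyop n := [ffun _ => 1].
Definition toy_mone (n : nat) : toyop n := [ffun _ => -1].

Definition inG (n : nat) (g : toyop n) : Prop :=
  exists (alpha : int) (p : 'I_n -> pauli),
    (alpha = 1 \/ alpha = -1) /\ g = toy_op alpha p.

(* n-qubit operators: matrices indexed by computational basis states
   {ffun 'I_n -> bool}, with integer entries (the Pauli group generated by
   -1, X_k, Z_k has integer matrices). *)
Definition qop (n : nat) := {ffun 'I_n -> bool} -> {ffun 'I_n -> bool} -> int.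

Definition qmul (n : nat) (A B : qop n) : qop n :=
  fun x y => \sum_(z : {ffun 'I_n -> bool}) A x z * B z y.

Definition qX (x y : bool) : int := if x != y then 1 else 0.
Definition qZ (x y : bool) : int := if x == y then (if x then -1 else 1) else 0.
Definition qI (x y : bool) : int := if x == y then 1 else 0.
Definition mul2 (A B : bool -> bool -> int) (x y : bool) : int :=
  A x false * B false y + A x true * B true y.

(* image under m of a single-system label: m(X)=X, m(Z)=Z, m(Y)=m(Z X)=Z X *)
Definition mlab (a : pauli) : bool -> bool -> int :=
  match a with PI => qI | PX => qX | PZ => qZ | PY => mul2 qZ qX end.

Definition m_op (n : nat) (alpha : int) (p : 'I_n -> pauli) : qop n :=
  fun x y => alpha * \prod_(j < n) mlab (p j) (x j) (y j).

Definition toy_commute (n : nat) (g h : toyop n) : Prop :=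
  exists (a : int) (p : 'I_n -> pauli) (b : int) (q : 'I_n -> pauli),
    [/\ (a = 1 \/ a = -1), (b = 1 \/ b = -1),
        g = toy_op a p, h = toy_op b q &
        forall x y, qmul (m_op a p) (m_op b q) x y
                    = qmul (m_op b q) (m_op a p) x y].

Definition subgroupG (n : nat) (S : toyop n -> Prop) : Prop :=
  [/\ (forall g, S g -> inG g),
      S (toy_one n),
      (forall g h, S g -> S h -> S (toy_mul g h)) &
      (forall g, S g -> exists2 h, S h & toy_mul g h = toy_one n)].

Definition toy_stab_state (n : nat) (S : toyop n -> Prop) : Prop :=
  [/\ subgroupG S,
      (forall g h, S g -> S h -> toy_commute g h) &
      ~ S (toy_mone n)].

Definition label_of (q p : 'F_2) : pauli :=
  match q == 0, p == 0 with
  | true, true => PI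
  | true, false => PZ
  | false, true => PX
  | false, false => PY
  end.

Definition obs_corr_lab (n : nat) (f : phase n) (p : 'I_n -> pauli) : Prop :=
  forall j, p j = label_of (qc f j) (pc f j).

Definition obs_corr (n : nat) (f : phase n) (g : toyop n) : Prop :=
  exists (alpha : int) (p : 'I_n -> pauli),
    [/\ (alpha = 1 \/ alpha = -1), g = toy_op alpha p & obs_corr_lab f p].

Definition sgnF2 (x : 'F_2) : int := if x == 0 then 1 else -1.

Definition state_corr (n : nat) (S : toyop n -> Prop)
    (V : {set phase n}) (v : phase n) : Prop :=
  forall f, f \in V ->
    exists p : 'I_n -> pauli,
      obs_corr_lab f p /\ S (toy_op (sgnF2 (fdot f v)) p).

From HB Require Import structures.
From mathcomp Require Import all_boot all_order all_algebra.
From mathcomp Require Import zify boolp.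
Set Implicit Arguments. Unset Strict Implicit. Unset Printing Implicit Defensive.
Import GRing.Theory.
Local Open Scope ring_scope.

(* Toy operators are diagonal, so the labels of observables multiply like
   vectors of Z_2^2 add, with no phase.  Under m, the single-system factors
   of two operators commute or anticommute, and the total sign is
   (-1)^<f,g>: toy commutation is symplectic commutation.  Given (V, v), the
   operators (-1)^(f.v) labels(f), f in V, form a stabilizer state because
   f |-> f.v is linear.  Conversely, the labels occurring in a stabilizer
   state S form an isotropic subspace V, each with a unique sign (-1)^chi(f)
   since -1 is not in S; closure of S under products makes chi additive on V,
   so it extends to a functional f |-> f.v on all of Z_2^2n. *)

Lemma F2_cases (x : 'F_2) : x = 0 \/ x = 1.
Proof. by case: x => -[|[|//]] Hk; [left|right]; apply: val_inj. Qed.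

Lemma sgnF2D : {morph sgnF2 : x y / x + y >-> x * y}.
Proof. by move=> x y; case: (F2_cases x) => ->; case: (F2_cases y) => ->. Qed.

Lemma sgnF2_sum n (F : 'I_n -> 'F_2) :
  sgnF2 (\sum_(j < n) F j) = \prod_(j < n) sgnF2 (F j).
Proof. exact: (big_morph sgnF2 sgnF2D). Qed.

Lemma sgnF2_pm (x : 'F_2) : sgnF2 x = 1 \/ sgnF2 x = -1.
Proof. by case: (F2_cases x) => ->; [left|right]. Qed.

Lemma sgnF2_neq0 (x : 'F_2) : sgnF2 x != 0.
Proof. by case: (F2_cases x) => ->. Qed.

Lemma addrr_phase n (f : phase n) : f + f = 0.
Proof.
by apply/rowP => i; rewrite !mxE; case: (F2_cases (f 0 i)) => ->; apply/eqP.
Qed.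

Lemma qcD n (f g : phase n) j : qc (f + g) j = qc f j + qc g j.
Proof. by rewrite /qc mxE. Qed.

Lemma pcD n (f g : phase n) j : pc (f + g) j = pc f j + pc g j.
Proof. by rewrite /pc mxE. Qed.

Lemma phaseP n (f g : phase n) :
  (forall j, qc f j = qc g j /\ pc f j = pc g j) -> f = g.
Proof.
move=> eq_fg; apply/rowP => i.
have i_lt : (i./2 < n)%N by rewrite ltn_half_double -mul2n.
have [eq_q eq_p] := eq_fg (Ordinal i_lt); have := odd_double_half i.
case: (odd i) => /= def_i.
- suff -> : i = Ordinal (p_idx_lt (Ordinal i_lt)) by [].
  by apply: val_inj => /=; lia.
- suff -> : i = Ordinal (q_idx_lt (Ordinal i_lt)) by [].
  by apply: val_inj => /=; lia.
Qed.

Lemma fdotDl n (f g v : phase n) : fdot (f + g) v = fdot f v + fdot g v.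
Proof.
by rewrite /fdot -big_split; apply: eq_bigr => i _; rewrite mxE mulrDl.
Qed.

Lemma fdot0l n (v : phase n) : fdot 0 v = 0.
Proof. by rewrite /fdot big1 // => i _; rewrite mxE mul0r. Qed.

Definition labels n (f : phase n) : 'I_n -> pauli :=
  fun j => label_of (qc f j) (pc f j).

Lemma obs_corr_labE n (f : phase n) p : obs_corr_lab f p -> p = labels f.
Proof. by move=> corr_p; apply: funext => j; rewrite corr_p. Qed.

Lemma label_of_inj q1 p1 q2 p2 :
  label_of q1 p1 = label_of q2 p2 -> q1 = q2 /\ p1 = p2.
Proof.
by case: (F2_cases q1) => ->; case: (F2_cases p1) => ->;
   case: (F2_cases q2) => ->; case: (F2_cases p2) => ->.
Qed.

Lemma labels_inj n : injective (@labels n).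
Proof.
move=> f g eq_fg; apply: phaseP => j; apply: label_of_inj.
exact: (congr1 (fun l => l j) eq_fg).
Qed.

Lemma toy1_label_mul q1 p1 q2 p2 k :
  toy1 (label_of q1 p1) k * toy1 (label_of q2 p2) k =
  toy1 (label_of (q1 + q2) (p1 + p2)) k.
Proof.
by case: (F2_cases q1) => ->; case: (F2_cases p1) => ->;
   case: (F2_cases q2) => ->; case: (F2_cases p2) => ->;
   case: k => -[|[|[|[|]]]].
Qed.

Lemma toy_op_labels_mul n a b (f g : phase n) :
  toy_mul (toy_op a (labels f)) (toy_op b (labels g))
  = toy_op (a * b) (labels (f + g)).
Proof.
apply/ffunP => k; rewrite !ffunE mulrACA -big_split /=; congr (_ * _).
by apply: eq_bigr => j _; rewrite toy1_label_mul -qcD -pcD.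
Qed.

Lemma toy_op_labels0 n a : toy_op a (labels (0 : phase n)) = [ffun=> a].
Proof.
apply/ffunP => k; rewrite !ffunE big1 ?mulr1 // => j _.
by rewrite /labels /qc /pc !mxE.
Qed.

Lemma toy1_ord0 a : toy1 a ord0 = 1.
Proof. by case: a. Qed.

Lemma toy1_inj a b : toy1 a =1 toy1 b -> a = b.
Proof.
move=> eq_ab; have := eq_ab (@Ordinal 4 1 isT).
have := eq_ab (@Ordinal 4 2 isT); by clear eq_ab; case: a; case: b.
Qed.

Lemma toy_op_at_ord0 n a (p : 'I_n -> pauli) : toy_op a p [ffun=> ord0] = a.
Proof. by rewrite !ffunE big1 ?mulr1 // => j _; rewrite ffunE toy1_ord0. Qed.

Lemma toy_op_at_single n a (p : 'I_n -> pauli) j t :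
  toy_op a p [ffun i => if i == j then t else ord0] = a * toy1 (p j) t.
Proof.
rewrite !ffunE (bigD1 j) //= big1 => [|i /negbTE neq_ij].
  by rewrite ffunE eqxx mulr1.
by rewrite ffunE neq_ij toy1_ord0.
Qed.

Lemma toy_op_scalar_inj n a b (p q : 'I_n -> pauli) :
  toy_op a p = toy_op b q -> a = b.
Proof. by move=> eq_pq; rewrite -(toy_op_at_ord0 a p) eq_pq toy_op_at_ord0. Qed.

Lemma toy_op_labels_inj n a b (p q : 'I_n -> pauli) :
  b != 0 -> toy_op a p = toy_op b q -> p = q.
Proof.
move=> b_neq0 eq_pq; have eq_ab := toy_op_scalar_inj eq_pq.
apply: funext => j; apply: toy1_inj => t; apply: (mulfI b_neq0).
by rewrite -{1}eq_ab -!toy_op_at_single eq_pq.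
Qed.

Lemma qmul_m_op n a b (p q : 'I_n -> pauli) x y :
  qmul (m_op a p) (m_op b q) x y =
  a * b * \prod_(j < n) mul2 (mlab (p j)) (mlab (q j)) (x j) (y j).
Proof.
rewrite /qmul /m_op.
under eq_bigr => z _ do rewrite mulrACA -big_split /=.
rewrite -mulr_sumr; congr (_ * _).
rewrite -(bigA_distr_bigA (fun j t => mlab (p j) (x j) t * mlab (q j) t (y j))).
by apply: eq_bigr => j _; rewrite big_bool /mul2 addrC.
Qed.

Lemma mul2_mlab_comm q1 p1 q2 p2 x y :
  mul2 (mlab (label_of q1 p1)) (mlab (label_of q2 p2)) x y =
  sgnF2 (q1 * p2 - p1 * q2) *
  mul2 (mlab (label_of q2 p2)) (mlab (label_of q1 p1)) x y.
Proof.
by case: (F2_cases q1) => ->; case: (F2_cases p1) => ->;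
   case: (F2_cases q2) => ->; case: (F2_cases p2) => ->; case: x; case: y.
Qed.

Lemma m_op_labels_comm n a b (f g : phase n) x y :
  qmul (m_op a (labels f)) (m_op b (labels g)) x y =
  sgnF2 (symp f g) * qmul (m_op b (labels g)) (m_op a (labels f)) x y.
Proof.
rewrite !qmul_m_op /symp sgnF2_sum.
under eq_bigr => j _ do rewrite mul2_mlab_comm.
by rewrite big_split /= [b * a]mulrC mulrCA.
Qed.

Lemma mul2_mlab_neq0 a b : exists y, mul2 (mlab a) (mlab b) false y != 0.
Proof. by case: a; case: b; first [by exists false | by exists true]. Qed.

Lemma qmul_m_op_neq0 n a b (p q : 'I_n -> pauli) :
  a != 0 -> b != 0 -> exists x y, qmul (m_op a p) (m_op b q) x y != 0.
Proof.
move=> a_neq0 b_neq0.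
have [y y_neq0] := fin_all_exists (fun j => mul2_mlab_neq0 (p j) (q j)).
exists [ffun=> false], [ffun j => y j].
rewrite qmul_m_op !mulf_neq0 //; apply/prodf_neq0 => j _.
by rewrite !ffunE; apply: y_neq0.
Qed.

Lemma m_op_labels_commute n a b (f g : phase n) : a != 0 -> b != 0 ->
  (forall x y, qmul (m_op a (labels f)) (m_op b (labels g)) x y =
               qmul (m_op b (labels g)) (m_op a (labels f)) x y)
  <-> commute_obs f g.
Proof.
move=> a_neq0 b_neq0; split => [comm_fg | symp0 x y]; last first.
  by rewrite m_op_labels_comm symp0 mul1r.
(* m(g) m(f) has a nonzero entry, which the sign -1 would force to vanish. *)
have [x [y neq0]] := qmul_m_op_neq0 (labels g) (labels f) b_neq0 a_neq0.
have := comm_fg x y; rewrite m_op_labels_comm.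
case: (F2_cases (symp f g)) => // ->; rewrite /sgnF2 /=.
by move: neq0; set P := qmul _ _ x y; lia.
Qed.

Lemma toy_commute_labels n a b (f g : phase n) :
  a = 1 \/ a = -1 -> b = 1 \/ b = -1 ->
  toy_commute (toy_op a (labels f)) (toy_op b (labels g)) <-> commute_obs f g.
Proof.
have pm_neq0 (c : int) : c = 1 \/ c = -1 -> c != 0 by case=> ->.
move=> a_pm b_pm; split => [|comm_fg].
  move=> [a' [p [b' [q [/pm_neq0 a'_neq0 /pm_neq0 b'_neq0 eq_f eq_g]]]]].
  rewrite -(toy_op_labels_inj a'_neq0 eq_f) -(toy_op_labels_inj b'_neq0 eq_g).
  by move/(m_op_labels_commute _ _ a'_neq0 b'_neq0).
exists a, (labels f), b, (labels g); split => //.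
exact/(m_op_labels_commute _ _ (pm_neq0 _ a_pm) (pm_neq0 _ b_pm)).
Qed.

Lemma obs_corr_mul n (f g : phase n) (g' g'' : toyop n) :
  obs_corr f g' -> obs_corr g g'' -> obs_corr (f + g) (toy_mul g' g'').
Proof.
move=> [a [p [a_pm -> /obs_corr_labE ->]]] [b [q [b_pm -> /obs_corr_labE ->]]].
exists (a * b), (labels (f + g)); split => //; last exact: toy_op_labels_mul.
by case: a_pm => ->; case: b_pm => ->; [left|right|right|left].
Qed.

Section StabilizerOfEpistemicState.

Variables (n : nat) (V : {set phase n}) (v : phase n).
Hypothesis isoV : isotropic V.

Definition stab_of : toyop n -> Prop :=
  fun h => exists2 f, f \in V & h = toy_op (sgnF2 (fdot f v)) (labels f).

Lemma stab_of_subgroup : subgroupG stab_of.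
Proof.
have [[V0 VD _] _] := isoV; split.
- move=> _ [f _ ->]; exists (sgnF2 (fdot f v)), (labels f).
  by split => //; apply: sgnF2_pm.
- by exists 0 => //; rewrite fdot0l toy_op_labels0.
- move=> _ _ [f fV ->] [g gV ->]; exists (f + g); first exact: VD.
  by rewrite toy_op_labels_mul fdotDl sgnF2D.
- move=> _ [f fV ->]; exists (toy_op (sgnF2 (fdot f v)) (labels f)).
    by exists f.
  rewrite toy_op_labels_mul -sgnF2D -fdotDl addrr_phase fdot0l.
  exact: toy_op_labels0.
Qed.

Lemma stab_of_stab_state : toy_stab_state stab_of.
Proof.
have [_ comm_V] := isoV; split; first exact: stab_of_subgroup.
  move=> _ _ [f fV ->] [g gV ->].
  apply/toy_commute_labels; [exact: sgnF2_pm..|exact: comm_V].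
move=> [f _]; rewrite -[toy_mone n](toy_op_labels0 _ (-1)) => eq_f.
have f0 : f = 0.
  exact/labels_inj/esym/(toy_op_labels_inj (sgnF2_neq0 _) eq_f).
by have := toy_op_scalar_inj eq_f; rewrite f0 fdot0l.
Qed.

Lemma state_corr_stab_of : state_corr stab_of V v.
Proof. by move=> f fV; exists (labels f); split => //; exists f. Qed.

End StabilizerOfEpistemicState.

Lemma subspace_functional_extends (K : finFieldType) (m : nat)
    (V : {set 'rV[K]_m}) (chi : 'rV[K]_m -> K) :
  0 \in V -> {in V &, forall f g, f + g \in V} ->
  (forall a, {in V, forall f, a *: f \in V}) ->
  {in V &, {morph chi : f g / f + g}} ->
  (forall a, {in V, forall f, chi (a *: f) = a * chi f}) ->
  exists v : 'rV[K]_m, {in V, forall f : 'rV_m, \sum_i f 0 i * v 0 i = chi f}.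
Proof.
(* chi composed with a projection onto the span of V is linear everywhere. *)
move=> V0 VD VZ chiD chiZ; pose U := <<in_tuple (enum V)>>%VS.
have UV u : u \in U -> u \in V.
  move/coord_span => ->; apply: (big_ind (fun w => w \in V)) => //.
  move=> i _; apply: VZ; rewrite -mem_enum; exact/mem_nth/ltn_ord.
pose psi x := chi (projv U x).
have psiD : {morph psi : x y / x + y}.
  by move=> x y; rewrite /psi raddfD chiD ?UV ?memv_proj.
have psiZ a x : psi (a *: x) = a * psi x.
  by rewrite /psi linearZ chiZ ?UV ?memv_proj.
have psi0 : psi 0 = 0 by rewrite -(scale0r 0) psiZ mul0r.
exists (\row_i psi (delta_mx 0 i)) => f fV.
have -> : chi f = psi f by rewrite /psi projv_id // memv_span ?mem_enum.
rewrite [in RHS](row_sum_delta f) (big_morph psi psiD psi0).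
by apply: eq_bigr => i _; rewrite mxE psiZ.
Qed.

Section EpistemicStateOfStabilizer.

Variables (n : nat) (S : toyop n -> Prop).
Hypothesis stabS : toy_stab_state S.

Definition stab_support : {set phase n} :=
  [set f | `[< exists a, S (toy_op a (labels f)) >]].

Definition stab_sign (f : phase n) : 'F_2 :=
  if `[< S (toy_op (-1) (labels f)) >] then 1 else 0.

Lemma mem_stab_support f a : S (toy_op a (labels f)) -> f \in stab_support.
Proof. by move=> Sf; rewrite inE; apply/asboolP; exists a. Qed.

Lemma stab_one : S (toy_op 1 (labels 0)).
Proof. by have [[_ S1 _ _] _ _] := stabS; rewrite toy_op_labels0. Qed.

Lemma stab_not_both_signs f :
  S (toy_op 1 (labels f)) -> S (toy_op (-1) (labels f)) -> False.
Proof.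
have [[_ _ SM _] _ S_mone] := stabS; move=> S_plus S_minus; apply: S_mone.
have := SM _ _ S_plus S_minus.
by rewrite toy_op_labels_mul addrr_phase mul1r toy_op_labels0.
Qed.

Lemma stab_signP f :
  f \in stab_support -> S (toy_op (sgnF2 (stab_sign f)) (labels f)).
Proof.
have [[SG _ _ _] _ _] := stabS; rewrite inE => /asboolP [a Sa].
rewrite /stab_sign; case: asboolP => // S_minus.
have [a' [p [a'_pm eq_a]]] := SG _ Sa.
by move: Sa; rewrite (toy_op_scalar_inj eq_a); case: a'_pm => ->.
Qed.

Lemma stab_signE f c : S (toy_op (sgnF2 c) (labels f)) -> stab_sign f = c.
Proof.
move=> Sc; have Ss := stab_signP (mem_stab_support Sc).
case: (F2_cases c) Sc => -> Sc; case: (F2_cases (stab_sign f)) Ss => -> Ss //;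
  exfalso.
- exact: (stab_not_both_signs Sc Ss).
- exact: (stab_not_both_signs Ss Sc).
Qed.

Lemma stab_sign0 : stab_sign 0 = 0.
Proof. exact/stab_signE/stab_one. Qed.

Lemma stab_sign_addP f g : f \in stab_support -> g \in stab_support ->
  S (toy_op (sgnF2 (stab_sign f + stab_sign g)) (labels (f + g))).
Proof.
have [[_ _ SM _] _ _] := stabS; move=> /stab_signP Sf /stab_signP Sg.
by have := SM _ _ Sf Sg; rewrite toy_op_labels_mul sgnF2D.
Qed.

Lemma stab_support_isotropic : isotropic stab_support.
Proof.
have [_ comm_S _] := stabS; split.
  split => [|f g fV gV|a f fV]; first exact: mem_stab_support stab_one.
    exact: mem_stab_support (stab_sign_addP fV gV).
  case: (F2_cases a) => ->; rewrite ?scale0r ?scale1r //.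
  exact: mem_stab_support stab_one.
move=> f g fV gV; have := comm_S _ _ (stab_signP fV) (stab_signP gV).
by move/(toy_commute_labels _ _ (sgnF2_pm _) (sgnF2_pm _)).
Qed.

Lemma stab_support_corr : exists v, state_corr S stab_support v.
Proof.
have [[V0 VD VZ] _] := stab_support_isotropic.
have [v fdot_v] : exists v, {in stab_support, forall f, fdot f v = stab_sign f}.
  apply: subspace_functional_extends => // [f g fV gV|a f fV].
    exact/stab_signE/stab_sign_addP.
  case: (F2_cases a) => ->; last by rewrite scale1r mul1r.
  by rewrite scale0r mul0r stab_sign0.
exists v => f fV; exists (labels f); split => //.
by rewrite fdot_v //; apply: stab_signP.
Qed.

End EpistemicStateOfStabilizer.

Theorem mainTheorem3 (n : nat) (hn : (0 < n)%N) :
  [/\ (forall (V : {set phase n}) (v : phase n), isotropic V ->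
         exists S : toyop n -> Prop, toy_stab_state S /\ state_corr S V v),
      (forall S : toyop n -> Prop, toy_stab_state S ->
         exists (V : {set phase n}) (v : phase n),
           isotropic V /\ state_corr S V v) &
      (forall (f g : phase n) (g' g'' : toyop n),
         obs_corr f g' -> obs_corr g g'' -> obs_corr (f + g) (toy_mul g' g''))].
Proof.
split.
- move=> V v isoV; exists (stab_of V v).
  by split; [exact: stab_of_stab_state | exact: state_corr_stab_of].
- move=> S stabS; have [v corr_v] := stab_support_corr stabS.
  by exists (stab_support S), v; split; first exact: stab_support_isotropic.
- exact: obs_corr_mul.
Qed.
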